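(* Let $G$ and $H$ be graphs, each with at least one vertex, on disjoint vertex sets, and let $S_G$ and $S_H$ be MDNSs of $G$ and $H$, respectively. Then: (1) $\tilde\gamma_{gr}^{\times2}(G+H)=\tilde\gamma_{gr}^{\times2}(G)+\tilde\gamma_{gr}^{\times2}(H)$ and $S_G\oplus S_H$ is an MDNS of $G+H$; (2) $\tilde\gamma_{gr}^{\times2}(G\vee H)=\max\{\tilde\gamma_{gr}^{\times2}(G)+a(G),\tilde\gamma_{gr}^{\times2}(H)+a(H)\}$; moreover: (a) if $\tilde\gamma_{gr}^{\times2}(G)+a(G)\ge\tilde\gamma_{gr}^{\times2}(H)+a(H)$ and $a(G)=0$, then $S_G$ is an MDNS of $G\vee H$; (b) if $\tilde\gamma_{gr}^{\times2}(G)+a(G)\ge\tilde\gamma_{gr}^{\times2}(H)+a(H)$ and $a(G)=1$, then for any $h\in V(H)$, $S_G\oplus(h)$ is an MDNS of $G\vee H$; (c) if $\tilde\gamma_{gr}^{\times2}(G)+a(G)<\tilde\gamma_{gr}^{\times2}(H)+a(H)$ and $a(H)=0$, then $S_H$ is an MDNS of $G\vee H$; (d) if $\tilde\gamma_{gr}^{\times2}(G)+a(G)<\tilde\gamma_{gr}^{\times2}(H)+a(H)$ and $a(H)=1$, then for any $g\in V(G)$, $S_H\oplus(g)$ is an MDNS of $G\vee H$.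
   Context: Graphs are finite, simple, undirected; $N[v]$ closed neighborhood. $G+H$ is the disjoint union; $G\vee H$ is the join (disjoint union plus all edges between $V(G)$ and $V(H)$). A sequence of distinct vertices $(v_1,\dots,v_k)$ is a double neighborhood sequence (DNS) if for each $i$ some $w\in N[v_i]$ satisfies $|\{j<i:w\in N[v_j]\}|\le1$; an MDNS is a DNS of maximum length and $\tilde\gamma_{gr}^{\times2}$ is that length. $\oplus$ is concatenation. $a(X)=1$ if $X$ has an isolated vertex, $a(X)=0$ otherwise. *)

From mathcomp Require Import all_boot.
Set Implicit Arguments. Unset Strict Implicit. Unset Printing Implicit Defensive.

Record sgraph := SGraph {
  vert :> finType;
  adj : rel vert;
  adj_sym : symmetric adj;
  adj_irr : irreflexive adj }.

Definition cnbhd (G : sgraph) (v : G) : {set G} := [set w | (w == v) || adj v w].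

Definition dns_step (G : sgraph) (p : seq G) (v : G) : bool :=
  [exists w, (w \in cnbhd v) && (count (fun u => w \in cnbhd u) p <= 1)].

Definition is_dns (G : sgraph) (s : seq G) : bool :=
  uniq s && [forall i : 'I_(size s), dns_step (take i s) (tnth (in_tuple s) i)].

Definition gdns (G : sgraph) : nat :=
  \max_(k < #|G|.+1 | [exists t : k.-tuple G, is_dns t]) k.

Definition is_mdns (G : sgraph) (s : seq G) : Prop :=
  is_dns s /\ forall t : seq G, is_dns t -> size t <= size s.

Definition a_iso (G : sgraph) : nat := [exists v : G, [forall w : G, ~~ adj v w]].

Definition sum_adj (G H : sgraph) : rel (G + H)%type :=
  fun x y => match x, y with
             | inl a, inl b => adj a b
             | inr a, inr b => adj a b
             | _, _ => false end.

Lemma sum_adj_sym G H : symmetric (@sum_adj G H).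
Proof. by case=> a [] b //=; apply: adj_sym. Qed.
Lemma sum_adj_irr G H : irreflexive (@sum_adj G H).
Proof. by case=> a /=; apply: adj_irr. Qed.
Definition gsum (G H : sgraph) : sgraph := SGraph (@sum_adj_sym G H) (@sum_adj_irr G H).

Definition join_adj (G H : sgraph) : rel (G + H)%type :=
  fun x y => match x, y with
             | inl a, inl b => adj a b
             | inr a, inr b => adj a b
             | _, _ => true end.

Lemma join_adj_sym G H : symmetric (@join_adj G H).
Proof. by case=> a [] b //=; apply: adj_sym. Qed.
Lemma join_adj_irr G H : irreflexive (@join_adj G H).
Proof. by case=> a /=; apply: adj_irr. Qed.
Definition gjoin (G H : sgraph) : sgraph := SGraph (@join_adj_sym G H) (@join_adj_irr G H).

Definition seqL (G H : sgraph) (s : seq G) : seq (G + H)%type := map inl s.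
Definition seqR (G H : sgraph) (s : seq H) : seq (G + H)%type := map inr s.

From mathcomp Require Import all_boot zify.
Set Implicit Arguments. Unset Strict Implicit. Unset Printing Implicit Defensive.

(* In G + H no closed neighbourhood meets both sides, so a sequence is a DNS
   exactly when its G-part and its H-part are, and the lengths add up.
   In G v H every vertex dominates the whole other side. Take a DNS of G v H
   whose last vertex g lies in G, with earlier parts P in G and Q in H, Q
   nonempty (otherwise P ++ [g] is a DNS of G). If the footprint of g lies in
   G, then Q is a single vertex and P ++ [g] leaves the footprint dominated
   once; if it lies in H, then P has at most one vertex and Q leaves the
   footprint dominated at most once, or never when P is nonempty. A DNS of a
   graph X leaving some vertex dominated at most once extends by that vertex or
   by a neighbour of it unless it is isolated, so it is shorter than
   gdns X + a(X) (by two when the vertex is not dominated at all). This bounds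
   every DNS of G v H by the maximum; conversely an MDNS of G is a DNS of G v H,
   and an isolated vertex of G is a footprint for one more vertex of H. *)

Section DoubleNeighbourhoodSequences.
Variable G : sgraph.
Implicit Types (s p : seq G) (v w : G).

Definition dom_count w p := count (fun u => w \in cnbhd u) p.

Lemma in_cnbhd v w : (w \in cnbhd v) = (w == v) || adj v w.
Proof. by rewrite inE. Qed.

Lemma cnbhd_refl v : v \in cnbhd v.
Proof. by rewrite in_cnbhd eqxx. Qed.

Lemma dom_count_rcons w p v : dom_count w (rcons p v) = dom_count w p + (w \in cnbhd v).
Proof. by rewrite /dom_count -cats1 count_cat /= addn0. Qed.

Lemma dom_count_isolated z s :
  (forall w, ~~ adj z w) -> uniq s -> dom_count z s <= 1.
Proof.
move=> z_iso s_uniq; rewrite /dom_count (eq_count (a2 := pred1 z)).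
  by rewrite (count_uniq_mem _ s_uniq) leq_b1.
by move=> u /=; rewrite in_cnbhd adj_sym (negbTE (z_iso u)) orbF eq_sym.
Qed.

Lemma a_iso1P : a_iso G = 1 <-> exists z, forall w, ~~ adj z w.
Proof.
rewrite /a_iso; case: existsP => [[z /forallP z_iso]|no_iso]; first by split=> // _; exists z.
by split=> // -[z z_iso]; case: no_iso; exists z; apply/forallP.
Qed.

Lemma a_iso_le1 : a_iso G <= 1.
Proof. exact: leq_b1. Qed.

Lemma is_dns_nil : is_dns ([::] : seq G).
Proof. by rewrite /is_dns /=; apply/forallP => -[]. Qed.

Lemma is_dns_rcons s v :
  is_dns (rcons s v) = [&& is_dns s, v \notin s & dns_step s v].
Proof.
have stepsE t : [forall i : 'I_(size t), dns_step (take i t) (tnth (in_tuple t) i)] =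
    all (fun i => dns_step (take i t) (nth v t i)) (iota 0 (size t)).
  apply/forallP/allP => [steps i|steps i].
    by rewrite mem_iota add0n => lt_i_t; have := steps (Ordinal lt_i_t); rewrite (tnth_nth v).
  by rewrite (tnth_nth v); apply: steps; rewrite mem_iota add0n ltn_ord.
rewrite /is_dns !stepsE rcons_uniq size_rcons -addn1 iotaD add0n all_cat /= andbT.
rewrite -cats1 take_size_cat // nth_cat ltnn subnn /=.
have -> : all (fun i => dns_step (take i (s ++ [:: v])) (nth v (s ++ [:: v]) i)) (iota 0 (size s))
        = all (fun i => dns_step (take i s) (nth v s i)) (iota 0 (size s)).
  apply: eq_in_all => i; rewrite mem_iota add0n /= => lt_i_s.
  by rewrite takel_cat ?(ltnW lt_i_s) // nth_cat lt_i_s.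
by case: (v \in s); case: (uniq s); case: (all _ _); case: (dns_step s v).
Qed.

Lemma dns_step_small p v : size p <= 1 -> dns_step p v.
Proof.
move=> small_p; apply/existsP; exists v; rewrite cnbhd_refl /=.
exact: leq_trans (count_size _ _) small_p.
Qed.

Lemma is_dns_rcons_dom s v w :
  is_dns s -> v \notin s -> w \in cnbhd v -> dom_count w s <= 1 -> is_dns (rcons s v).
Proof.
move=> dns_s v_s w_v w_s; rewrite is_dns_rcons dns_s v_s /=.
by apply/existsP; exists w; rewrite w_v.
Qed.

Lemma size_dns_le_gdns s : is_dns s -> size s <= gdns G.
Proof.
move=> dns_s; have /andP [s_uniq _] := dns_s.
have lt_s : size s < #|G|.+1 by rewrite ltnS -(card_uniqP s_uniq) max_card.
apply: (@leq_bigmax_cond _ _ _ (Ordinal lt_s)) => /=.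
by apply/existsP; exists (in_tuple s).
Qed.

Lemma exists_dns_gdns : exists2 s : seq G, is_dns s & size s = gdns G.
Proof.
have : 0 < #|[pred k : 'I_(#|G|.+1) | [exists t : k.-tuple G, is_dns t]]|.
  by apply/card_gt0P; exists ord0; rewrite inE; apply/existsP; exists [tuple]; apply: is_dns_nil.
rewrite /gdns; case/(eq_bigmax_cond (fun k : 'I_(#|G|.+1) => val k)) => k.
by rewrite inE => /existsP [t dns_t] ->; exists t; rewrite ?size_tuple.
Qed.

Lemma mdnsE s : is_mdns s <-> is_dns s /\ size s = gdns G.
Proof.
split=> [[dns_s max_s]|[dns_s size_s]]; last by split=> // t /size_dns_le_gdns; rewrite size_s.
split=> //; apply/eqP; rewrite eqn_leq size_dns_le_gdns //=.
by case: exists_dns_gdns => t /max_s le_t <-.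
Qed.

(* If [w] is dominated at most once by [s], then [s] extends by [w] itself, by a
   neighbour of [w] (which cannot lie in [s]), or else [w] is isolated. *)
Lemma gdns_dom_count_le1 s w :
  is_dns s -> dom_count w s <= 1 -> (size s).+1 <= gdns G + a_iso G.
Proof.
move=> dns_s w_s; have /andP [s_uniq _] := dns_s.
have [w_in_s|w_notin_s] := boolP (w \in s); last first.
  have := size_dns_le_gdns (is_dns_rcons_dom dns_s w_notin_s (cnbhd_refl w) w_s).
  by rewrite size_rcons => /leq_trans; apply; apply: leq_addr.
have [/existsP [x w_x]|no_nbr] := boolP [exists x, adj w x].
  have w_in_x : w \in cnbhd x by rewrite in_cnbhd adj_sym w_x orbT.
  have x_notin_s : x \notin s.
    apply/negP => x_in_s.
    have x_in_rem : x \in rem w s.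
      rewrite (mem_rem_uniq _ s_uniq) inE x_in_s andbT.
      by apply: contraTneq w_x => ->; rewrite adj_irr.
    have : 0 < count (fun u => w \in cnbhd u) (rem w s) by rewrite -has_count; apply/hasP; exists x.
    by rewrite count_rem w_in_s cnbhd_refl /=; move: w_s; rewrite /dom_count; lia.
  have := size_dns_le_gdns (is_dns_rcons_dom dns_s x_notin_s w_in_x w_s).
  by rewrite size_rcons => /leq_trans; apply; apply: leq_addr.
have -> : a_iso G = 1.
  by apply/a_iso1P; exists w => x; apply: contra no_nbr => w_x; apply/existsP; exists x.
by rewrite addn1 ltnS size_dns_le_gdns.
Qed.

Lemma gdns_dom_count0 s w :
  is_dns s -> dom_count w s = 0 -> (size s).+2 <= gdns G + a_iso G.
Proof.
move=> dns_s w_s.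
have w_notin_s : w \notin s.
  apply: contra_eqN w_s => w_in_s.
  by rewrite -lt0n -has_count; apply/hasP; exists w; rewrite ?cnbhd_refl.
have := @gdns_dom_count_le1 (rcons s w) w.
rewrite size_rcons dom_count_rcons w_s cnbhd_refl; apply=> //.
by apply: (is_dns_rcons_dom dns_s w_notin_s (cnbhd_refl w)); rewrite w_s.
Qed.

End DoubleNeighbourhoodSequences.

Section Isomorphism.
Variables (G G' : sgraph) (f : G -> G') (g : G' -> G).
Hypotheses (fK : cancel f g) (gK : cancel g f) (adj_f : forall x y, adj (f x) (f y) = adj x y).

Lemma cnbhd_iso v w : (f w \in cnbhd (f v)) = (w \in cnbhd v).
Proof. by rewrite !in_cnbhd adj_f (can_eq fK). Qed.

Lemma dom_count_iso w p : dom_count (f w) (map f p) = dom_count w p.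
Proof. by rewrite /dom_count count_map; apply: eq_count => u /=; rewrite cnbhd_iso. Qed.

Lemma dns_step_map p v : dns_step (map f p) (f v) = dns_step p v.
Proof.
apply/existsP/existsP => [[w' /andP [w'_v w'_p]]|[w /andP [w_v w_p]]].
  exists (g w'); move: w'_v w'_p.
  by rewrite -/(dom_count _ _) -{1 2}(gK w') cnbhd_iso dom_count_iso => ->.
by exists (f w); rewrite cnbhd_iso -/(dom_count _ _) dom_count_iso w_v.
Qed.

Lemma is_dns_map s : is_dns (map f s) = is_dns s.
Proof.
elim/last_ind: s => [|s v IHs]; first by rewrite !is_dns_nil.
by rewrite map_rcons !is_dns_rcons IHs dns_step_map (mem_map (can_inj fK)).
Qed.

Lemma gdns_iso : gdns G = gdns G'.
Proof.
apply/eqP; rewrite eqn_leq; apply/andP; split.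
  by case: (exists_dns_gdns G) => s dns_s <-; rewrite -(size_map f) size_dns_le_gdns ?is_dns_map.
case: (exists_dns_gdns G') => t dns_t <-.
by rewrite -(size_map g) size_dns_le_gdns // -is_dns_map (mapK gK).
Qed.

Lemma mdns_map s : is_mdns s -> is_mdns (map f s).
Proof. by rewrite !mdnsE is_dns_map size_map gdns_iso. Qed.

End Isomorphism.

Definition sum_swap {A B : Type} (x : A + B) : B + A :=
  match x with inl a => inr a | inr b => inl b end.

Definition lproj {A B : Type} (s : seq (A + B)) : seq A :=
  pmap (fun x => if x is inl a then Some a else None) s.

Definition rproj {A B : Type} (s : seq (A + B)) : seq B :=
  pmap (fun x => if x is inr b then Some b else None) s.

Section SumProjections.
Variables A B : Type.
Implicit Type s : seq (A + B).

Lemma sum_swapK : cancel (@sum_swap A B) sum_swap.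
Proof. by case. Qed.

Lemma lproj_swap s : lproj (map sum_swap s) = rproj s.
Proof. by elim: s => [|[a|b] s IHs] //=; rewrite /lproj /rproj /= in IHs *; rewrite IHs. Qed.

Lemma size_lproj_rproj s : size (lproj s) + size (rproj s) = size s.
Proof.
by elim: s => [|[a|b] s IHs] //=; rewrite /lproj /rproj /= in IHs *; rewrite -IHs ?addnS.
Qed.

Lemma lproj_rcons s x :
  lproj (rcons s x) = if x is inl a then rcons (lproj s) a else lproj s.
Proof. by rewrite /lproj -cats1 pmap_cat; case: x => [a|b] /=; rewrite ?cats1 ?cats0. Qed.

Lemma rproj_rcons s x :
  rproj (rcons s x) = if x is inr b then rcons (rproj s) b else rproj s.
Proof. by rewrite /rproj -cats1 pmap_cat; case: x => [a|b] /=; rewrite ?cats1 ?cats0. Qed.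

Lemma lproj_cat s t : lproj (s ++ t) = lproj s ++ lproj t.
Proof. exact: pmap_cat. Qed.

Lemma rproj_cat s t : rproj (s ++ t) = rproj s ++ rproj t.
Proof. exact: pmap_cat. Qed.

Lemma lproj_inl (s : seq A) : lproj (map (@inl A B) s) = s.
Proof. by elim: s => //= a s IHs; rewrite /lproj /= -/(lproj _) IHs. Qed.

Lemma rproj_inl (s : seq A) : rproj (map (@inl A B) s) = [::].
Proof. by elim: s. Qed.

Lemma lproj_inr (s : seq B) : lproj (map (@inr A B) s) = [::].
Proof. by elim: s. Qed.

Lemma rproj_inr (s : seq B) : rproj (map (@inr A B) s) = s.
Proof. by elim: s => //= b s IHs; rewrite /rproj /= -/(rproj _) IHs. Qed.

End SumProjections.

Section SumProjectionsMem.
Variables A B : eqType.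

Lemma mem_lproj (s : seq (A + B)) a : (a \in lproj s) = (inl a \in s).
Proof. by elim: s => [|[a'|b] s IHs] //=; rewrite /lproj /= in IHs *; rewrite !inE IHs. Qed.

Lemma mem_rproj (s : seq (A + B)) b : (b \in rproj s) = (inr b \in s).
Proof. by elim: s => [|[a|b'] s IHs] //=; rewrite /rproj /= in IHs *; rewrite !inE IHs. Qed.

End SumProjectionsMem.

Section DisjointUnion.
Variables G H : sgraph.
Implicit Type p : seq (gsum G H).

Lemma gsum_swap_adj (x y : gsum G H) : @adj (gsum H G) (sum_swap x) (sum_swap y) = adj x y.
Proof. by case: x => a; case: y => b. Qed.

Lemma gsum_cnbhd_inl (v w : G) :
  ((inl w : gsum G H) \in cnbhd (inl v : gsum G H)) = (w \in cnbhd v).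
Proof. by rewrite (@in_cnbhd (gsum G H)) in_cnbhd. Qed.

Lemma gsum_cnbhd_inr_inl (v : G) (w : H) :
  ((inr w : gsum G H) \in cnbhd (inl v : gsum G H)) = false.
Proof. by rewrite (@in_cnbhd (gsum G H)). Qed.

Lemma gsum_cnbhd_inl_inr (v : H) (w : G) :
  ((inl w : gsum G H) \in cnbhd (inr v : gsum G H)) = false.
Proof. by rewrite (@in_cnbhd (gsum G H)). Qed.

Lemma dom_count_gsum_inl (w : G) p : dom_count (inl w : gsum G H) p = dom_count w (lproj p).
Proof.
elim: p => [|[a|b] p IHp] //=; rewrite /lproj /dom_count /= in IHp *.
  by rewrite gsum_cnbhd_inl IHp.
by rewrite gsum_cnbhd_inl_inr IHp.
Qed.

Lemma dns_step_gsum_inl p (v : G) : dns_step p (inl v : gsum G H) = dns_step (lproj p) v.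
Proof.
apply/existsP/existsP => [[[w|w] /andP [w_v w_p]]|[w /andP [w_v w_p]]].
- by exists w; rewrite -gsum_cnbhd_inl w_v -/(dom_count _ _) -dom_count_gsum_inl.
- by rewrite gsum_cnbhd_inr_inl in w_v.
- by exists (inl w); rewrite gsum_cnbhd_inl w_v -/(dom_count _ _) dom_count_gsum_inl.
Qed.

End DisjointUnion.

Lemma dns_step_gsum_inr (G H : sgraph) (p : seq (gsum G H)) (v : H) :
  dns_step p (inr v : gsum G H) = dns_step (rproj p) v.
Proof.
rewrite -(@dns_step_map (gsum G H) (gsum H G) _ _
            (@sum_swapK _ _) (@sum_swapK _ _) (@gsum_swap_adj G H)) /=.
by rewrite dns_step_gsum_inl lproj_swap.
Qed.

Lemma is_dns_gsum (G H : sgraph) (p : seq (gsum G H)) :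
  is_dns p = is_dns (lproj p) && is_dns (rproj p).
Proof.
elim/last_ind: p => [|p x IHp]; first by rewrite !is_dns_nil.
rewrite is_dns_rcons lproj_rcons rproj_rcons IHp.
case: x => [a|b]; rewrite is_dns_rcons.
  rewrite dns_step_gsum_inl mem_lproj.
  by case: (is_dns (lproj p)); case: (is_dns (rproj p)); rewrite /= ?andbT ?andbF.
rewrite dns_step_gsum_inr mem_rproj.
by case: (is_dns (lproj p)); case: (is_dns (rproj p)); rewrite /= ?andbT ?andbF.
Qed.

Lemma is_dns_gsum_seq (G H : sgraph) (s : seq G) (t : seq H) :
  @is_dns (gsum G H) (seqL H s ++ seqR G t) = is_dns s && is_dns t.
Proof.
by rewrite is_dns_gsum lproj_cat rproj_cat lproj_inl lproj_inr rproj_inl rproj_inr cats0.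
Qed.

Lemma gdns_gsum (G H : sgraph) : gdns (gsum G H) = gdns G + gdns H.
Proof.
apply/eqP; rewrite eqn_leq; apply/andP; split.
  case: (exists_dns_gdns (gsum G H)) => S; rewrite is_dns_gsum => /andP [dns_l dns_r] <-.
  by rewrite -size_lproj_rproj leq_add ?size_dns_le_gdns.
case: (exists_dns_gdns G) => s dns_s <-; case: (exists_dns_gdns H) => t dns_t <-.
have := @size_dns_le_gdns (gsum G H) (seqL H s ++ seqR G t).
by rewrite is_dns_gsum_seq dns_s dns_t size_cat !size_map; apply.
Qed.

Lemma mdns_gsum (G H : sgraph) (s : seq G) (t : seq H) :
  is_mdns s -> is_mdns t -> @is_mdns (gsum G H) (seqL H s ++ seqR G t).
Proof.
rewrite !mdnsE is_dns_gsum_seq size_cat !size_map gdns_gsum.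
by move=> [-> ->] [-> ->].
Qed.

Lemma map_swap_seqL (G H : sgraph) (s : seq H) : map sum_swap (seqL G s) = seqR G s.
Proof. by rewrite -map_comp. Qed.

Section Join.
Variables G H : sgraph.
Implicit Type p : seq (gjoin G H).

Lemma gjoin_swap_adj (x y : gjoin G H) : @adj (gjoin H G) (sum_swap x) (sum_swap y) = adj x y.
Proof. by case: x => a; case: y => b. Qed.

Lemma gjoin_cnbhd_inl (v w : G) :
  ((inl w : gjoin G H) \in cnbhd (inl v : gjoin G H)) = (w \in cnbhd v).
Proof. by rewrite (@in_cnbhd (gjoin G H)) in_cnbhd. Qed.

Lemma gjoin_cnbhd_inr (v w : H) :
  ((inr w : gjoin G H) \in cnbhd (inr v : gjoin G H)) = (w \in cnbhd v).
Proof. by rewrite (@in_cnbhd (gjoin G H)) in_cnbhd. Qed.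

Lemma gjoin_cnbhd_inr_inl (v : G) (w : H) : (inr w : gjoin G H) \in cnbhd (inl v : gjoin G H).
Proof. by rewrite (@in_cnbhd (gjoin G H)) orbT. Qed.

Lemma gjoin_cnbhd_inl_inr (v : H) (w : G) : (inl w : gjoin G H) \in cnbhd (inr v : gjoin G H).
Proof. by rewrite (@in_cnbhd (gjoin G H)) orbT. Qed.

Lemma dom_count_gjoin_inl (w : G) p :
  dom_count (inl w : gjoin G H) p = dom_count w (lproj p) + size (rproj p).
Proof.
elim: p => [|[a|b] p IHp] //=; rewrite /lproj /rproj /dom_count /= in IHp *; rewrite IHp.
  by rewrite gjoin_cnbhd_inl addnA.
by rewrite gjoin_cnbhd_inl_inr add1n addnS.
Qed.

Lemma dom_count_gjoin_inr (w : H) p :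
  dom_count (inr w : gjoin G H) p = size (lproj p) + dom_count w (rproj p).
Proof.
elim: p => [|[a|b] p IHp] //=; rewrite /lproj /rproj /dom_count /= in IHp *; rewrite IHp.
  by rewrite gjoin_cnbhd_inr_inl addSn.
by rewrite gjoin_cnbhd_inr addnCA.
Qed.

Lemma dns_step_gjoin_inl p (v : G) :
  dns_step p (inl v : gjoin G H) <->
  (exists2 w, w \in cnbhd v & dom_count w (lproj p) + size (rproj p) <= 1) \/
  (exists w, size (lproj p) + dom_count w (rproj p) <= 1).
Proof.
split=> [/existsP [[w|w] /andP [w_v w_p]]|[[w w_v w_p]|[w w_p]]].
- by left; exists w; rewrite -?gjoin_cnbhd_inl -?dom_count_gjoin_inl.
- by right; exists w; rewrite -dom_count_gjoin_inr.
- apply/existsP; exists (inl w).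
  by rewrite gjoin_cnbhd_inl w_v -/(dom_count _ _) dom_count_gjoin_inl.
- apply/existsP; exists (inr w).
  by rewrite gjoin_cnbhd_inr_inl -/(dom_count _ _) dom_count_gjoin_inr.
Qed.

Lemma is_dns_lproj_gjoin p : is_dns p -> is_dns (lproj p).
Proof.
elim/last_ind: p => [|p x IHp]; first by move=> _; apply: is_dns_nil.
rewrite is_dns_rcons lproj_rcons => /and3P [dns_p x_p step_x].
case: x x_p step_x => [a|b] x_p step_x; last exact: IHp.
rewrite is_dns_rcons IHp // mem_lproj x_p.
case/dns_step_gjoin_inl: step_x => [[w w_a w_p]|[w w_p]]; last by apply: dns_step_small; lia.
by apply/existsP; exists w; rewrite w_a /=; move: w_p; rewrite /dom_count; lia.
Qed.

Lemma is_dns_gjoin_seqL (s : seq G) : is_dns s -> @is_dns (gjoin G H) (seqL H s).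
Proof.
elim/last_ind: s => [|s v IHs]; first by move=> _; apply: is_dns_nil.
rewrite /seqL map_rcons !is_dns_rcons => /and3P [dns_s v_s step_v].
rewrite IHs // -mem_lproj lproj_inl v_s /=.
apply/dns_step_gjoin_inl; left; case/existsP: step_v => w /andP [w_v w_s].
by exists w; rewrite ?lproj_inl ?rproj_inl ?addn0.
Qed.

Lemma is_dns_gjoin_seqL_inr (s : seq G) (h : H) :
  a_iso G = 1 -> is_dns s -> @is_dns (gjoin G H) (seqL H s ++ [:: inr h]).
Proof.
case/a_iso1P => z z_iso dns_s; have /andP [s_uniq _] := dns_s.
rewrite cats1 is_dns_rcons is_dns_gjoin_seqL // -mem_rproj rproj_inl /=.
apply/existsP; exists (inl z); rewrite gjoin_cnbhd_inl_inr -/(dom_count _ _).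
by rewrite dom_count_gjoin_inl lproj_inl rproj_inl addn0 dom_count_isolated.
Qed.

End Join.

Lemma is_dns_gjoin_swap (G H : sgraph) (S : seq (gjoin G H)) :
  @is_dns (gjoin H G) (map sum_swap S) = is_dns S.
Proof.
exact: (@is_dns_map (gjoin G H) (gjoin H G) _ _
          (@sum_swapK _ _) (@sum_swapK _ _) (@gjoin_swap_adj G H)).
Qed.

Lemma gdns_gjoinC (G H : sgraph) : gdns (gjoin G H) = gdns (gjoin H G).
Proof.
exact: (@gdns_iso (gjoin G H) (gjoin H G) _ _
          (@sum_swapK _ _) (@sum_swapK _ _) (@gjoin_swap_adj G H)).
Qed.

Lemma mdns_gjoin_swap (G H : sgraph) (S : seq (gjoin G H)) :
  is_mdns S -> @is_mdns (gjoin H G) (map sum_swap S).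
Proof.
exact: (@mdns_map (gjoin G H) (gjoin H G) _ _
          (@sum_swapK _ _) (@sum_swapK _ _) (@gjoin_swap_adj G H)).
Qed.

Lemma is_dns_rproj_gjoin (G H : sgraph) (S : seq (gjoin G H)) : is_dns S -> is_dns (rproj S).
Proof. by rewrite -is_dns_gjoin_swap -lproj_swap; apply: is_dns_lproj_gjoin. Qed.

Lemma size_gjoin_dns_rcons_inl (G H : sgraph) (s : seq (gjoin G H)) (g : G) :
  is_dns (rcons s (inl g : gjoin G H)) ->
  (size s).+1 <= maxn (gdns G + a_iso G) (gdns H + a_iso H).
Proof.
move=> dns_sg; have := dns_sg; rewrite is_dns_rcons => /and3P [_ _ step_g].
have dns_Pg : is_dns (rcons (lproj s) g) by have := is_dns_lproj_gjoin dns_sg; rewrite lproj_rcons.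
have dns_Q : is_dns (rproj s) by have := is_dns_rproj_gjoin dns_sg; rewrite rproj_rcons.
have le_PG := size_dns_le_gdns dns_Pg; rewrite size_rcons in le_PG.
rewrite -size_lproj_rproj.
have [Q0|Q_pos] := posnP (size (rproj s)).
  by rewrite Q0 addn0; apply: leq_trans (leq_maxl _ _); apply: leq_trans le_PG (leq_addr _ _).
case/dns_step_gjoin_inl: step_g => [[w w_g w_s]|[w w_s]].
  have w_Pg : dom_count w (rcons (lproj s) g) <= 1 by rewrite dom_count_rcons w_g; lia.
  have := gdns_dom_count_le1 dns_Pg w_Pg; rewrite size_rcons.
  by move=> le_G; apply: leq_trans (leq_maxl _ _); lia.
apply: leq_trans (leq_maxr _ _).
have [P0|P_pos] := posnP (size (lproj s)).
  by have := @gdns_dom_count_le1 _ _ w dns_Q; rewrite P0 in w_s *; lia.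
by have := @gdns_dom_count0 _ _ w dns_Q; lia.
Qed.

Lemma size_gjoin_dns_le (G H : sgraph) (S : seq (gjoin G H)) :
  is_dns S -> size S <= maxn (gdns G + a_iso G) (gdns H + a_iso H).
Proof.
case/lastP: S => [|s [g|h]] //; rewrite size_rcons; first exact: size_gjoin_dns_rcons_inl.
rewrite -is_dns_gjoin_swap map_rcons maxnC => /size_gjoin_dns_rcons_inl.
by rewrite size_map.
Qed.

Lemma gdns_gjoin (G H : sgraph) : 0 < #|G| -> 0 < #|H| ->
  gdns (gjoin G H) = maxn (gdns G + a_iso G) (gdns H + a_iso H).
Proof.
wlog le_HG : G H / gdns H + a_iso H <= gdns G + a_iso G.
  move=> gen G0 H0; case/orP: (leq_total (gdns H + a_iso H) (gdns G + a_iso G)) => [le_HG|le_GH].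
    exact: gen le_HG G0 H0.
  by rewrite gdns_gjoinC maxnC (gen _ _ le_GH H0 G0).
move=> _ /card_gt0P [h _]; apply/eqP; rewrite eqn_leq; apply/andP; split.
  by case: (exists_dns_gdns (gjoin G H)) => S /size_gjoin_dns_le + <-.
rewrite (maxn_idPl le_HG); case: (exists_dns_gdns G) => s dns_s <-.
case aG: (a_iso G) (a_iso_le1 G) => [|[|]] // _.
  have := size_dns_le_gdns (is_dns_gjoin_seqL H dns_s).
  by rewrite size_map addn0.
have := size_dns_le_gdns (is_dns_gjoin_seqL_inr h aG dns_s).
by rewrite size_cat size_map addn1.
Qed.

Lemma mdns_gjoin_seqL (G H : sgraph) (s : seq G) :
  0 < #|G| -> 0 < #|H| -> is_mdns s ->
  gdns H + a_iso H <= gdns G + a_iso G -> a_iso G = 0 ->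
  @is_mdns (gjoin G H) (seqL H s).
Proof.
move=> G0 H0 /mdnsE [dns_s size_s] le_HG aG; apply/mdnsE; split; first exact: is_dns_gjoin_seqL.
by rewrite size_map gdns_gjoin // (maxn_idPl le_HG) aG addn0.
Qed.

Lemma mdns_gjoin_seqL_inr (G H : sgraph) (s : seq G) (h : H) :
  0 < #|G| -> 0 < #|H| -> is_mdns s ->
  gdns H + a_iso H <= gdns G + a_iso G -> a_iso G = 1 ->
  @is_mdns (gjoin G H) (seqL H s ++ [:: inr h]).
Proof.
move=> G0 H0 /mdnsE [dns_s size_s] le_HG aG; apply/mdnsE.
split; first exact: is_dns_gjoin_seqL_inr.
by rewrite size_cat size_map gdns_gjoin // (maxn_idPl le_HG) aG size_s addn1.
Qed.

Theorem lemma4 (G H : sgraph) (SG : seq G) (SH : seq H) :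
  0 < #|G| -> 0 < #|H| ->
  is_mdns SG -> is_mdns SH ->
  (* (1) *)
  (gdns (gsum G H) = gdns G + gdns H /\
   @is_mdns (gsum G H) (seqL H SG ++ seqR G SH)) /\
  (* (2) *)
  (gdns (gjoin G H) = maxn (gdns G + a_iso G) (gdns H + a_iso H) /\
   (gdns H + a_iso H <= gdns G + a_iso G -> a_iso G = 0 ->
      @is_mdns (gjoin G H) (seqL H SG)) /\
   (gdns H + a_iso H <= gdns G + a_iso G -> a_iso G = 1 ->
      forall h : H, @is_mdns (gjoin G H) (seqL H SG ++ [:: inr h])) /\
   (gdns G + a_iso G < gdns H + a_iso H -> a_iso H = 0 ->
      @is_mdns (gjoin G H) (seqR G SH)) /\
   (gdns G + a_iso G < gdns H + a_iso H -> a_iso H = 1 ->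
      forall g : G, @is_mdns (gjoin G H) (seqR G SH ++ [:: inl g]))).
Proof.
move=> G0 H0 mdns_SG mdns_SH.
split; first by split; [exact: gdns_gsum | exact: mdns_gsum].
split; first exact: gdns_gjoin.
split; first exact: mdns_gjoin_seqL.
split; first by move=> le_HG aG h; apply: mdns_gjoin_seqL_inr.
split=> [/ltnW le_GH aH | /ltnW le_GH aH g].
  by rewrite -map_swap_seqL; apply/mdns_gjoin_swap/mdns_gjoin_seqL.
rewrite -map_swap_seqL -[[:: inl g]]/(map sum_swap [:: inr g : gjoin H G]) -map_cat.
exact/mdns_gjoin_swap/mdns_gjoin_seqL_inr.
Qed.
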